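(* Consider Algorithm PDS-SPP described in the context (with an arbitrary vector $v_k$ used in the $x$-update). Suppose that $$\alpha_k^t=1,\quad\|\mathcal A\|^2\le\eta_k^{t-1}q_k^t\quad\text{for all }t\ge2,\ k\ge1,$$ $$\beta_kT_{k-1}\alpha_k^1=\beta_{k-1}T_k,\quad\alpha_k^1\|\mathcal A\|^2\le\eta_{k-1}^{T_{k-1}}q_k^1\quad\text{for all }k\ge2.$$ Let $$B=\sum_{k=1}^N\frac{\beta_k}{T_k}\sum_{t=1}^{T_k}\big[\langle\mathcal A^\top z_k^t-\mathcal A^\top z,x_k^t-\tilde u_k^t\rangle+q_k^tU(z_k^{t-1},z_k^t)+\eta_k^tV(x_k^{t-1},x_k^t)\big].$$ Then for every $z\in\mathcal Z$, $$B\ge-\frac{\beta_N}{T_N}\|\mathcal A\|\,|z_N-z|\,\|x_N-x_N^{T_N-1}\|+\frac{\beta_N\eta_N^{T_N}}{2T_N}\|x_N^{T_N-1}-x_N^{T_N}\|^2.$$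
   Context: Setting. $\mathcal X$ closed convex subset of a finite-dimensional space with norm $\|\cdot\|$; $\mathcal Z$ closed convex subset of a finite-dimensional space with norm $|\cdot|$; $\mathcal A$ linear with $\|\mathcal A\|:=\sup\{\langle\mathcal Ax,z\rangle:\|x\|\le1,|z|\le1\}$; $h$ convex on $\mathcal Z$; $\mu\ge0$; $\nu$ $1$-strongly convex on $\mathcal X$ w.r.t. $\|\cdot\|$; $\zeta$ $1$-strongly convex on $\mathcal Z$ w.r.t. $|\cdot|$; $U(\hat z,z)=\zeta(z)-\zeta(\hat z)-\langle\zeta'(\hat z),z-\hat z\rangle$, $V(\hat x,x)=\nu(x)-\nu(\hat x)-\langle\nu'(\hat x),x-\hat x\rangle$. Algorithm: $x_0\in\mathcal X$, $z_0\in\mathcal Z$; for $k=1,\dots,N$, with some vector $v_k$ and positive integer $T_k$: $x_k^0=x_{k-1}$, $z_k^0=z_{k-1}$, $x_k^{-1}=x_{k-1}^{T_{k-1}-1}$ ($x_1^{-1}=x_0$); for $t=1,\dots,T_k$: $\tilde u_k^t=x_k^{t-1}+\alpha_k^t(x_k^{t-1}-x_k^{t-2})$, $z_k^t=\arg\min_{z\in\mathcal Z}h(z)+\langle-\mathcal A\tilde u_k^t,z\rangle+q_k^tU(z_k^{t-1},z)$, $x_k^t=\arg\min_{x\in\mathcal X}\mu\nu(x)+\langle v_k+\mathcal A^\top z_k^t,x\rangle+\eta_k^tV(x_k^{t-1},x)+p_kV(x_{k-1},x)$; $x_k=x_k^{T_k}$, $z_k=z_k^{T_k}$. Parameters: positive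 $\beta_k,q_k^t,\eta_k^t,p_k$, nonnegative $\alpha_k^t$. *)

From HB Require Import structures.
From mathcomp Require Import all_boot all_order all_algebra.
From mathcomp Require Import all_classical all_reals all_analysis.
Set Implicit Arguments. Unset Strict Implicit. Unset Printing Implicit Defensive.
Import Order.TTheory GRing.Theory Num.Theory.
Import numFieldNormedType.Exports.
Local Open Scope classical_set_scope.
Local Open Scope ring_scope.

Section Defs.
Variable R : realType.

Definition dot (n : nat) (u v : 'rV[R]_n) : R := \sum_(i < n) u 0 i * v 0 i.

Definition is_norm (n : nat) (N : 'rV[R]_n -> R) : Prop :=
  [/\ forall x y, N (x + y) <= N x + N y,
      forall (a : R) x, N (a *: x) = `|a| * N x
    & forall x, N x = 0 -> x = 0].

(* ||A|| = sup { <A x, z> : ||x|| <= 1, |z| <= 1 }, where A x := x *m A *)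
Definition opnorm (n m : nat) (nx : 'rV[R]_n -> R) (nz : 'rV[R]_m -> R)
  (A : 'M[R]_(n, m)) : R :=
  sup [set r | exists x z, [/\ nx x <= 1, nz z <= 1 & r = dot (x *m A) z]].

Definition convex_set_rV (n : nat) (S : set 'rV[R]_n) : Prop :=
  forall x y (l : R), S x -> S y -> 0 <= l <= 1 -> S (l *: x + (1 - l) *: y).

Definition convex_on (n : nat) (S : set 'rV[R]_n) (f : 'rV[R]_n -> R) : Prop :=
  forall x y (l : R), S x -> S y -> 0 <= l <= 1 ->
    f (l *: x + (1 - l) *: y) <= l * f x + (1 - l) * f y.

Definition strongly_convex_on (n : nat) (S : set 'rV[R]_n) (nrm : 'rV[R]_n -> R)
  (f : 'rV[R]_n -> R) : Prop :=
  forall x y (l : R), S x -> S y -> 0 <= l <= 1 ->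
    f (l *: x + (1 - l) *: y)
      <= l * f x + (1 - l) * f y - l * (1 - l) / 2 * nrm (x - y) ^+ 2.

Definition subgradient_on (n : nat) (S : set 'rV[R]_n) (f : 'rV[R]_n -> R)
  (g : 'rV[R]_n -> 'rV[R]_n) : Prop :=
  forall x y, S x -> S y -> f x + dot (g x) (y - x) <= f y.

Definition bregman (n : nat) (f : 'rV[R]_n -> R) (g : 'rV[R]_n -> 'rV[R]_n)
  (xh x : 'rV[R]_n) : R := f x - f xh - dot (g xh) (x - xh).

Definition xend (n : nat) (x : nat -> nat -> 'rV[R]_n) (x0 : 'rV[R]_n)
  (T : nat -> nat) (j : nat) : 'rV[R]_n :=
  if j is 0 then x0 else x j (T j).

(* x_k^{-1} = x_{k-1}^{T_{k-1}-1} (k >= 2), x_1^{-1} = x_0; argument is j = k-1 *)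
Definition xminus1 (n : nat) (x : nat -> nat -> 'rV[R]_n) (x0 : 'rV[R]_n)
  (T : nat -> nat) (j : nat) : 'rV[R]_n :=
  if j is 0 then x0 else x j (T j).-1.

Definition xtm2 (n : nat) (x : nat -> nat -> 'rV[R]_n) (x0 : 'rV[R]_n)
  (T : nat -> nat) (k t : nat) : 'rV[R]_n :=
  if t is 1 then xminus1 x x0 T k.-1 else x k (t - 2)%N.

Definition utilde (n : nat) (x : nat -> nat -> 'rV[R]_n) (x0 : 'rV[R]_n)
  (T : nat -> nat) (alpha : nat -> nat -> R) (k t : nat) : 'rV[R]_n :=
  x k t.-1 + alpha k t *: (x k t.-1 - xtm2 x x0 T k t).

End Defs.

From HB Require Import structures.
From mathcomp Require Import all_boot all_order all_algebra.
From mathcomp Require Import all_classical all_reals all_analysis.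
From mathcomp Require Import ring lra.
Import Order.TTheory GRing.Theory Num.Theory.
Import numFieldNormedType.Exports.
Local Open Scope classical_set_scope.
Local Open Scope ring_scope.

(* Put Y_k^t := <A^T (z_k^t - z), x_k^t - x_k^(t-1)> + eta_k^t/2 ||x_k^t - x_k^(t-1)||^2
   ([carry_out]) and, with d := x_k^(t-1) - x_k^(t-2),
   c_k^t := alpha_k^t <A^T (z_k^(t-1) - z), d> + (alpha_k^t ||A||)^2 / (2 q_k^t) ||d||^2
   ([carry_in]).  Since x_k^t - u_k^t = (x_k^t - x_k^(t-1)) - alpha_k^t d, bounding the
   cross term alpha_k^t <A^T (z_k^t - z_k^(t-1)), d> by ||A|| and Young's inequality, and
   the Bregman distances from below by half squared norms, each summand of B is at least
   Y_k^t - c_k^t.  The step-size conditions say exactly that c_k^t <= Y_k^(t-1) inside an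
   epoch and (beta_k/T_k) c_k^1 <= (beta_(k-1)/T_(k-1)) Y_(k-1)^(T_(k-1)) across epochs,
   while c_1^1 = 0 because x_1^(-1) = x_0 = x_1^0.  Hence the weighted sum telescopes to
   B >= (beta_N/T_N) Y_N^(T_N), and bounding the pairing in Y_N^(T_N) by ||A|| concludes. *)

Set Implicit Arguments. Unset Strict Implicit. Unset Printing Implicit Defensive.

Section Dot.
Variables (R : realType) (n : nat).
Implicit Types (a : R) (u v w : 'rV[R]_n).

Lemma dotDl u v w : dot (u + v) w = dot u w + dot v w.
Proof. by rewrite /dot -big_split; apply: eq_bigr => i _; rewrite mxE mulrDl. Qed.

Lemma dotDr u v w : dot u (v + w) = dot u v + dot u w.
Proof. by rewrite /dot -big_split; apply: eq_bigr => i _; rewrite mxE mulrDr. Qed.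

Lemma dotZl a u w : dot (a *: u) w = a * dot u w.
Proof. by rewrite /dot mulr_sumr; apply: eq_bigr => i _; rewrite mxE mulrA. Qed.

Lemma dotZr a u w : dot u (a *: w) = a * dot u w.
Proof. by rewrite /dot mulr_sumr; apply: eq_bigr => i _; rewrite mxE mulrCA. Qed.

Lemma dotNr u w : dot u (- w) = - dot u w.
Proof. by rewrite -scaleN1r dotZr mulN1r. Qed.

Lemma dotBr u v w : dot u (v - w) = dot u v - dot u w.
Proof. by rewrite dotDr dotNr. Qed.

Lemma dot0l w : dot 0 w = 0.
Proof. by rewrite -(scale0r 0) dotZl mul0r. Qed.

Lemma dot0r u : dot u 0 = 0.
Proof. by rewrite -(scale0r 0) dotZr mul0r. Qed.

Lemma dot_mulmx_tr m (A : 'M[R]_(n, m)) u (z : 'rV[R]_m) :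
  dot (u *m A) z = dot (z *m A^T) u.
Proof.
rewrite /dot; under eq_bigr => j _ do rewrite mxE big_distrl /=.
rewrite exchange_big; apply: eq_bigr => i _.
by rewrite mxE big_distrl /=; apply: eq_bigr => j _; rewrite mxE; ring.
Qed.

End Dot.

Section Norm.
Variables (R : realType) (n : nat) (nrm : 'rV[R]_n -> R).
Hypothesis nrm_norm : is_norm nrm.

Lemma nrm0 : nrm 0 = 0.
Proof. by case: nrm_norm => _ nrmZ _; rewrite -(scale0r 0) nrmZ normr0 mul0r. Qed.

Lemma nrmN u : nrm (- u) = nrm u.
Proof. by case: nrm_norm => _ nrmZ _; rewrite -scaleN1r nrmZ normrN normr1 mul1r. Qed.

Lemma nrmB u w : nrm (u - w) = nrm (w - u).
Proof. by rewrite -nrmN opprB. Qed.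

Lemma nrm_ge0 u : 0 <= nrm u.
Proof.
case: nrm_norm => nrmD _ _; have := nrmD u (- u).
by rewrite subrr nrm0 nrmN; lra.
Qed.

Lemma nrm_eq0 u : nrm u = 0 -> u = 0.
Proof. by case: nrm_norm => _ _; apply. Qed.

Lemma nrm_sum (I : Type) (r : seq I) (P : pred I) (F : I -> 'rV[R]_n) :
  nrm (\sum_(i <- r | P i) F i) <= \sum_(i <- r | P i) nrm (F i).
Proof.
case: nrm_norm => nrmD _ _.
elim/big_rec2: _ => [|i y1 y2 _ ih]; first by rewrite nrm0.
by apply: le_trans (nrmD _ _) _; rewrite lerD2l.
Qed.

Lemma nrm_le_mx_norm : exists2 K, 0 <= K & forall u, nrm u <= K * `|u|.
Proof.
case: nrm_norm => _ nrmZ _.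
exists (\sum_(i < n) nrm (delta_mx 0 i)) => [|u].
  by apply: sumr_ge0 => i _; exact: nrm_ge0.
rewrite {1}(row_sum_delta u); apply: le_trans (nrm_sum _ _ _) _.
rewrite mulr_suml; apply: ler_sum => i _; rewrite nrmZ mulrC ler_wpM2l ?nrm_ge0//.
by rewrite [leRHS]mx_normrE; apply/bigmax_geP; right; exists (0, i).
Qed.

Lemma nrm_continuous : continuous nrm.
Proof.
have [K K0 nrmK] := nrm_le_mx_norm.
move=> u; apply/(@cvgrPdist_le _ _ _ (nbhs u)) => e e0.
have eK : 0 < e / (K + 1) by rewrite divr_gt0 // ltr_wpDl.
have := @near_ball _ _ u _ eK; apply: filterS => w; rewrite mx_norm_ball /= => uw.
have : `|nrm u - nrm w| <= nrm (u - w).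
  case: nrm_norm => nrmD _ _; rewrite ler_norml.
  have := nrmD (w - u) u; have := nrmD (u - w) w; rewrite !subrK nrmB; lra.
move/le_trans; apply; apply: le_trans (nrmK _) _.
apply: le_trans (ler_wpM2l K0 (ltW uw)) _.
rewrite mulrA ler_pdivrMr ?ltr_wpDl // mulrDr mulr1 mulrC lerDl ltW //.
Qed.

Lemma mx_norm_le_nrm : exists2 c, 0 < c & forall u, c * `|u| <= nrm u.
Proof.
have [n0|n0] := posnP n.
  exists 1 => // u; rewrite (_ : u = 0) ?normr0 ?mulr0 ?nrm_ge0 //.
  by apply/rowP => -[i i_lt0]; exfalso; rewrite n0 in i_lt0.
pose S := [set u : 'rV[R]_n | `|u| = 1].
have unit_S u : u != 0 -> S (`|u|^-1 *: u).
  by rewrite -normr_eq0 => u0; rewrite /S /= normrZ normrV ?unitfE // normr_id mulVf.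
have S0 : S !=set0.
  exists (`|delta_mx 0 (Ordinal n0) : 'rV[R]_n|^-1 *: delta_mx 0 (Ordinal n0)).
  apply: unit_S; apply/eqP => /rowP /(_ (Ordinal n0)).
  by rewrite !mxE !eqxx => /eqP; rewrite oner_eq0.
have cS : compact S.
  apply: bounded_closed_compact.
    by exists 1; split => // M M1 u; rewrite /S /= => ->; exact: ltW.
  apply: (@preimage_closed _ _ (fun u : 'rV[R]_n => `|u|) [set r | r = 1]).
    by move=> u _; exact: norm_continuous.
  exact: closed_eq.
have [c Sc minc] := EVT_min_rV S0 cS (continuous_subspaceT nrm_continuous).
have c0 : 0 < nrm c.
  rewrite lt_def nrm_ge0 andbT; apply/eqP => /nrm_eq0 c0.
  by move: Sc; rewrite inE /S /= c0 normr0 => /eqP; rewrite eq_sym oner_eq0.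
exists (nrm c) => // u; have [->|u0] := eqVneq u 0.
  by rewrite normr0 mulr0 nrm_ge0.
have := minc _ (mem_set (unit_S u u0)); case: nrm_norm => _ nrmZ _.
rewrite nrmZ normrV ?unitfE ?normr_eq0 // normr_id => /(ler_wpM2l (normr_ge0 u)).
by rewrite mulrA mulfV ?normr_eq0 // mul1r mulrC.
Qed.

End Norm.

Section OperatorNorm.
Variables (R : realType) (n m : nat) (nx : 'rV[R]_n -> R) (nz : 'rV[R]_m -> R).
Variable A : 'M[R]_(n, m).
Hypotheses (nx_norm : is_norm nx) (nz_norm : is_norm nz).

Lemma opnorm_has_sup :
  has_sup [set r | exists u w, [/\ nx u <= 1, nz w <= 1 & r = dot (u *m A) w]].
Proof.
have [cx cx0 cxP] := mx_norm_le_nrm nx_norm.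
have [cz cz0 czP] := mx_norm_le_nrm nz_norm.
have entry_le k c (nrm : 'rV[R]_k -> R) u i :
    0 < c -> (forall u, c * `|u| <= nrm u) -> nrm u <= 1 -> `|u 0 i| <= c^-1.
  move=> c0 cP u1; rewrite -(ler_pM2l c0) mulfV ?gt_eqF //.
  apply: le_trans u1; apply: le_trans (cP u); rewrite ler_pM2l //.
  by rewrite [leRHS]mx_normrE; apply/bigmax_geP; right; exists (0, i).
split.
  by exists 0, 0, 0; rewrite (nrm0 nx_norm) (nrm0 nz_norm) mul0mx dot0l.
exists (\sum_j \sum_i cx^-1 * `|A i j| * cz^-1) => _ [u [w [u1 w1 ->]]].
apply: ler_sum => j _; rewrite mxE big_distrl /=; apply: ler_sum => i _.
apply: le_trans (ler_norm _) _; rewrite !normrM.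
by rewrite ler_pM ?mulr_ge0 ?ler_pM
  ?(entry_le _ _ _ _ _ cx0 cxP) ?(entry_le _ _ _ _ _ cz0 czP).
Qed.

Lemma opnorm_bound u w : dot (u *m A) w <= opnorm nx nz A * nx u * nz w.
Proof.
have [u0|u0] := eqVneq (nx u) 0.
  by rewrite u0 (nrm_eq0 nx_norm u0) mul0mx dot0l mulr0 mul0r.
have [w0|w0] := eqVneq (nz w) 0.
  by rewrite w0 (nrm_eq0 nz_norm w0) dot0r mulr0.
have pu : 0 < nx u by rewrite lt_def u0 nrm_ge0.
have pw : 0 < nz w by rewrite lt_def w0 nrm_ge0.
have : dot (((nx u)^-1 *: u) *m A) ((nz w)^-1 *: w) <= opnorm nx nz A.
  apply: (sup_upper_bound opnorm_has_sup); exists ((nx u)^-1 *: u), ((nz w)^-1 *: w).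
  case: nx_norm nz_norm => _ nxZ _ [_ nzZ _].
  by rewrite nxZ nzZ !ger0_norm ?invr_ge0 ?nrm_ge0 // !mulVf.
rewrite -scalemxAl dotZl dotZr mulrA -invfM -mulrA.
by rewrite ler_pdivrMl ?mulr_gt0 // mulrC (mulrC (nx u)) mulrA.
Qed.

End OperatorNorm.

Lemma sqr_nrm_le_bregman (R : realType) n (S : set 'rV[R]_n) nrm f g a b :
  is_norm nrm -> convex_set_rV S -> strongly_convex_on S nrm f ->
  subgradient_on S f g -> S a -> S b ->
  nrm (b - a) ^+ 2 / 2 <= bregman f g a b.
Proof.
move=> nrm_norm cS scf sgf Sa Sb.
set s := nrm (b - a) ^+ 2; set B := bregman f g a b.
have s_ge0 : 0 <= s by rewrite exprn_ge0 ?nrm_ge0.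
(* strong convexity on [a, b] against the subgradient inequality at [a], then [l -> 0] *)
have lerp_bound l : 0 < l <= 1 -> (1 - l) * (s / 2) <= B.
  case/andP => l0 l1.
  have Sl : S (l *: b + (1 - l) *: a) by apply: cS => //; rewrite ltW.
  have := scf b a l Sb Sa; rewrite ltW // l1 -/s => /(_ isT) sc.
  have := sgf a _ Sa Sl.
  have -> : l *: b + (1 - l) *: a - a = l *: (b - a).
    by apply/rowP => i; rewrite !mxE; ring.
  rewrite dotZr -/s => sg.
  rewrite -(ler_pM2l l0) /B /bregman.
  have -> : l * ((1 - l) * (s / 2)) = l * (1 - l) / 2 * s by ring.
  have -> : l * (f b - f a - dot (g a) (b - a))
          = l * f b + (1 - l) * f a - (f a + l * dot (g a) (b - a)) by ring.
  lra.
have B_ge0 : 0 <= B by have := lerp_bound 1; rewrite ltr01 lexx subrr mul0r; apply.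
rewrite leNgt; apply/negP => B_lt; have s_gt0 : 0 < s by lra.
set l := (s / 2 - B) / s.
have l_range : 0 < l <= 1.
  by rewrite divr_gt0 ?subr_gt0 //= ler_pdivrMr // mul1r; lra.
have := lerp_bound l l_range.
have -> : (1 - l) * (s / 2) = s / 4 + B / 2 by rewrite /l; field; rewrite gt_eqF.
lra.
Qed.

Lemma mulr_le_young (R : realFieldType) (q u v : R) :
  0 < q -> u * v <= q / 2 * v ^+ 2 + u ^+ 2 / (2 * q).
Proof.
move=> q0; rewrite -subr_ge0.
have -> : q / 2 * v ^+ 2 + u ^+ 2 / (2 * q) - u * v = (q * v - u) ^+ 2 / (2 * q).
  by field; rewrite gt_eqF.
by rewrite divr_ge0 ?sqr_ge0 ?mulr_ge0 ?ltW.
Qed.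

Lemma telescope_le_sum (R : realDomainType) (s : nat) (Y c a : nat -> R) :
  (0 < s)%N ->
  (forall t, (1 <= t <= s)%N -> Y t - c t <= a t) ->
  (forall t, (2 <= t <= s)%N -> c t <= Y t.-1) ->
  Y s - c 1%N <= \sum_(1 <= t < s.+1) a t.
Proof.
elim: s => [//|[|s] IH] _ Ya cY; first by rewrite big_nat1; apply: Ya.
rewrite big_nat_recr //=.
have : Y s.+1 - c 1%N <= \sum_(1 <= t < s.+2) a t.
  by apply: IH => // t /andP[t1 ts]; [apply: Ya | apply: cY]; rewrite t1 leqW.
have := Ya s.+2 (leqnn _); have := cY s.+2 (leqnn _) => /=; lra.
Qed.

Section Carry.
Variables (R : realType) (n m : nat) (nx : 'rV[R]_n -> R) (nz : 'rV[R]_m -> R).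
Variables (A : 'M[R]_(n, m)) (zz : 'rV[R]_m).
Hypotheses (nx_norm : is_norm nx) (nz_norm : is_norm nz).

Definition carry_out (zt : 'rV[R]_m) (dx : 'rV[R]_n) (eta : R) : R :=
  dot ((zt - zz) *m A^T) dx + eta / 2 * nx dx ^+ 2.

Definition carry_in (zs : 'rV[R]_m) (dx : 'rV[R]_n) (a q : R) : R :=
  a * dot ((zs - zz) *m A^T) dx + a ^+ 2 * opnorm nx nz A ^+ 2 / (2 * q) * nx dx ^+ 2.

Lemma carry_in_le_carry_out zs dx a q eta :
  0 <= a -> 0 < q -> a * opnorm nx nz A ^+ 2 <= eta * q ->
  carry_in zs dx a q <= a * carry_out zs dx eta.
Proof.
move=> a0 q0 aop; rewrite /carry_in /carry_out mulrDr lerD2l.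
have -> : a ^+ 2 * opnorm nx nz A ^+ 2 / (2 * q) * nx dx ^+ 2
        = a * (a * opnorm nx nz A ^+ 2 / (2 * q) * nx dx ^+ 2) by ring.
rewrite ler_wpM2l // ler_wpM2r ?exprn_ge0 ?nrm_ge0 //.
by rewrite ler_pdivrMr ?mulr_gt0 //; lra.
Qed.

Lemma carry_out_ge zt dx eta :
  - (opnorm nx nz A * nz (zt - zz) * nx dx) + eta / 2 * nx dx ^+ 2
  <= carry_out zt dx eta.
Proof.
rewrite /carry_out lerD2r lerNl -dotNr -dot_mulmx_tr.
by rewrite mulrAC -(nrmN nx_norm dx); apply: opnorm_bound.
Qed.

Lemma carry_out_sub_carry_in_le (zt zs : 'rV[R]_m) (xt xs e : 'rV[R]_n)
    (a q eta Bz Bx : R) :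
  0 <= a -> 0 < q -> 0 <= eta ->
  nz (zt - zs) ^+ 2 / 2 <= Bz -> nx (xt - xs) ^+ 2 / 2 <= Bx ->
  carry_out zt (xt - xs) eta - carry_in zs e a q
  <= dot (zt *m A^T - zz *m A^T) (xt - (xs + a *: e)) + q * Bz + eta * Bx.
Proof.
move=> a0 q0 eta0 zBz xBx; rewrite /carry_out /carry_in.
set op := opnorm nx nz A; set b := nz (zt - zs) in zBz *.
have -> : dot (zt *m A^T - zz *m A^T) (xt - (xs + a *: e))
    = dot ((zt - zz) *m A^T) (xt - xs) - a * dot ((zs - zz) *m A^T) e
      - a * dot ((zt - zs) *m A^T) e.
  rewrite -mulmxBl opprD addrA (dotBr _ (xt - xs)) dotZr.
  by rewrite -addrA -opprD -mulrDr -dotDl -mulmxDl [zs - zz + _]addrC subrKA.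
have cross : a * dot ((zt - zs) *m A^T) e <= (a * op * nx e) * b.
  by rewrite -dot_mulmx_tr -!mulrA ler_wpM2l // mulrA opnorm_bound.
have := mulr_le_young (a * op * nx e) b q0.
have := ler_wpM2l (ltW q0) zBz; have := ler_wpM2l eta0 xBx.
rewrite !exprMn; lra.
Qed.

End Carry.

Section PrimalDualSliding.
Variables (R : realType) (n m : nat) (X : set 'rV[R]_n) (Z : set 'rV[R]_m).
Variables (nx : 'rV[R]_n -> R) (nz : 'rV[R]_m -> R) (A : 'M[R]_(n, m)).
Variables (nu : 'rV[R]_n -> R) (nu' : 'rV[R]_n -> 'rV[R]_n).
Variables (zeta : 'rV[R]_m -> R) (zeta' : 'rV[R]_m -> 'rV[R]_m).
Variables (N : nat) (T : nat -> nat) (alpha q eta : nat -> nat -> R) (beta : nat -> R).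
Variables (x0 : 'rV[R]_n) (z0 : 'rV[R]_m).
Variables (x : nat -> nat -> 'rV[R]_n) (z : nat -> nat -> 'rV[R]_m) (zz : 'rV[R]_m).
Hypotheses (nx_norm : is_norm nx) (nz_norm : is_norm nz).
Hypotheses (X_convex : convex_set_rV X) (Z_convex : convex_set_rV Z).
Hypotheses (nu_sc : strongly_convex_on X nx nu) (nu_sg : subgradient_on X nu nu').
Hypotheses (zeta_sc : strongly_convex_on Z nz zeta) (zeta_sg : subgradient_on Z zeta zeta').
Hypotheses (N_gt0 : (0 < N)%N) (T_gt0 : forall k, (1 <= k <= N)%N -> (0 < T k)%N).
Hypothesis beta_gt0 : forall k, (1 <= k <= N)%N -> 0 < beta k.
Hypothesis steps_pos : forall k t, (1 <= k <= N)%N -> (1 <= t <= T k)%N ->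
  [/\ 0 < q k t, 0 < eta k t & 0 <= alpha k t].
Hypotheses (X_x0 : X x0) (Z_z0 : Z z0).
Hypothesis warm_start : forall k, (1 <= k <= N)%N ->
  x k 0%N = xend x x0 T k.-1 /\ z k 0%N = xend z z0 T k.-1.
Hypothesis X_x : forall k t, (1 <= k <= N)%N -> (1 <= t <= T k)%N -> X (x k t).
Hypothesis Z_z : forall k t, (1 <= k <= N)%N -> (1 <= t <= T k)%N -> Z (z k t).
Hypothesis inner_steps : forall k t, (1 <= k <= N)%N -> (2 <= t <= T k)%N ->
  alpha k t = 1 /\ opnorm nx nz A ^+ 2 <= eta k t.-1 * q k t.
Hypothesis outer_steps : forall k, (2 <= k <= N)%N ->
  beta k * (T k.-1)%:R * alpha k 1%N = beta k.-1 * (T k)%:R /\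
  alpha k 1%N * opnorm nx nz A ^+ 2 <= eta k.-1 (T k.-1) * q k 1%N.

Let w k := beta k / (T k)%:R.
Let Y k t := carry_out nx A zz (z k t) (x k t - x k t.-1) (eta k t).
Let c k t :=
  carry_in nx nz A zz (z k t.-1) (x k t.-1 - xtm2 x x0 T k t) (alpha k t) (q k t).
Let gap k t := dot (z k t *m A^T - zz *m A^T) (x k t - utilde x x0 T alpha k t)
  + q k t * bregman zeta zeta' (z k t.-1) (z k t)
  + eta k t * bregman nu nu' (x k t.-1) (x k t).

Lemma iterates_feasible k t :
  (1 <= k <= N)%N -> (t <= T k)%N -> X (x k t) /\ Z (z k t).
Proof.
move=> kN; case: t => [_|t tT]; last by split; [apply: X_x | apply: Z_z].
have [-> ->] := warm_start kN.
case: k kN => [//|[_|k /andP[_ kN]]]; first by split.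
have k1N : (1 <= k.+1 <= N)%N by exact: ltnW.
have TT : (1 <= T k.+1 <= T k.+1)%N by rewrite T_gt0 // leqnn.
by split; [apply: X_x | apply: Z_z].
Qed.

Lemma gap_ge_carry k t :
  (1 <= k <= N)%N -> (1 <= t <= T k)%N -> Y k t - c k t <= gap k t.
Proof.
move=> kN t1T; have [q0 eta0 alpha0] := steps_pos kN t1T.
have /andP[_ tT] := t1T.
have [Xt Zt] := iterates_feasible kN tT.
have [Xt' Zt'] := iterates_feasible kN (leq_trans (leq_pred t) tT).
apply: carry_out_sub_carry_in_le => //; first exact: ltW.
  exact: sqr_nrm_le_bregman Zt' Zt.
exact: sqr_nrm_le_bregman Xt' Xt.
Qed.

Lemma carry_in_le_carry_out_prev k t :
  (1 <= k <= N)%N -> (2 <= t <= T k)%N -> c k t <= Y k t.-1.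
Proof.
move=> kN t2T; have [alpha1 opq] := inner_steps kN t2T.
case: t t2T alpha1 opq => [|[|t]] // t2T alpha1 opq.
have [q0 _ _] := steps_pos kN (t2T : (1 <= t.+2 <= T k)%N).
rewrite /c /Y /xtm2 alpha1 subn2 -[carry_out _ _ _ _ _ _]mul1r.
by apply: carry_in_le_carry_out; rewrite ?mul1r.
Qed.

Lemma epoch_weight_ge0 k : (1 <= k <= N)%N -> 0 <= w k.
Proof. by move=> kN; rewrite /w divr_ge0 ?ler0n ?(ltW (beta_gt0 kN)). Qed.

Lemma carry_in_first_le_carry_out_last k :
  (2 <= k <= N)%N -> w k * c k 1%N <= w k.-1 * Y k.-1 (T k.-1).
Proof.
case: k => [|[|k]] // k2N; have [bT aop] := outer_steps k2N.
have kN : (1 <= k.+2 <= N)%N by case/andP: k2N.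
have Tk_neq0 : (T k.+2)%:R != 0 :> R by rewrite pnatr_eq0 -lt0n T_gt0.
have [q0 _ alpha0] := steps_pos kN (T_gt0 kN : (1 <= 1 <= T k.+2)%N).
have w_alpha : w k.+2 * alpha k.+2 1%N = w k.+1.
  rewrite /w; have -> : beta k.+1 = beta k.+2 * (T k.+1)%:R * alpha k.+2 1%N / (T k.+2)%:R.
    by rewrite bT mulfK.
  field; rewrite Tk_neq0 andbT pnatr_eq0 -lt0n T_gt0 //.
  by case/andP: k2N => _ /ltnW.
rewrite /c /Y /=; have [-> ->] := warm_start kN.
rewrite -w_alpha -mulrA ler_wpM2l ?epoch_weight_ge0 //.
exact: carry_in_le_carry_out.
Qed.

Lemma carry_in_first_eq0 : c 1%N 1%N = 0.
Proof.
have [x_start _] := warm_start (N_gt0 : (1 <= 1 <= N)%N).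
rewrite /c /carry_in /= x_start /= subrr dot0r (nrm0 nx_norm).
by rewrite expr0n /= !mulr0 addr0.
Qed.

Lemma weighted_carry_out_le_gap :
  w N * Y N (T N) <= \sum_(1 <= k < N.+1) w k * \sum_(1 <= t < (T k).+1) gap k t.
Proof.
have inner k : (1 <= k <= N)%N ->
    Y k (T k) - c k 1%N <= \sum_(1 <= t < (T k).+1) gap k t.
  move=> kN; apply: telescope_le_sum (T_gt0 kN) _ _ => t.
    exact: gap_ge_carry.
  exact: carry_in_le_carry_out_prev.
have := @telescope_le_sum _ N (fun k => w k * Y k (T k)) (fun k => w k * c k 1%N)
  (fun k => w k * \sum_(1 <= t < (T k).+1) gap k t) N_gt0.
rewrite carry_in_first_eq0 mulr0 subr0; apply.
  by move=> k kN; rewrite -mulrBr ler_wpM2l ?epoch_weight_ge0 ?inner.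
exact: carry_in_first_le_carry_out_last.
Qed.

End PrimalDualSliding.

Unset Implicit Arguments.

Theorem lemma5p4 (R : realType) (n m : nat)
  (X : set 'rV[R]_n) (Z : set 'rV[R]_m)
  (nx : 'rV[R]_n -> R) (nz : 'rV[R]_m -> R)
  (A : 'M[R]_(n, m)) (h : 'rV[R]_m -> R) (mu : R)
  (nu : 'rV[R]_n -> R) (nu' : 'rV[R]_n -> 'rV[R]_n)
  (zeta : 'rV[R]_m -> R) (zeta' : 'rV[R]_m -> 'rV[R]_m)
  (N : nat) (T : nat -> nat) (v : nat -> 'rV[R]_n)
  (alpha q eta : nat -> nat -> R) (beta p : nat -> R)
  (x0 : 'rV[R]_n) (z0 : 'rV[R]_m)
  (x : nat -> nat -> 'rV[R]_n) (z : nat -> nat -> 'rV[R]_m) :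
  (* setting *)
  is_norm nx -> is_norm nz ->
  closed X -> convex_set_rV X -> closed Z -> convex_set_rV Z ->
  convex_on Z h -> 0 <= mu ->
  strongly_convex_on X nx nu -> subgradient_on X nu nu' ->
  strongly_convex_on Z nz zeta -> subgradient_on Z zeta zeta' ->
  (0 < N)%N ->
  (forall k, (1 <= k <= N)%N -> (0 < T k)%N) ->
  (forall k, (1 <= k <= N)%N -> 0 < beta k /\ 0 < p k) ->
  (forall k t, (1 <= k <= N)%N -> (1 <= t <= T k)%N ->
     [/\ 0 < q k t, 0 < eta k t & 0 <= alpha k t]) ->
  (* algorithm PDS-SPP *)
  X x0 -> Z z0 ->
  (forall k, (1 <= k <= N)%N ->
     x k 0%N = xend x x0 T k.-1 /\ z k 0%N = xend z z0 T k.-1) ->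
  (forall k t, (1 <= k <= N)%N -> (1 <= t <= T k)%N ->
     Z (z k t) /\
     forall w, Z w ->
       h (z k t) + dot (- (utilde x x0 T alpha k t *m A)) (z k t)
         + q k t * bregman zeta zeta' (z k t.-1) (z k t)
       <= h w + dot (- (utilde x x0 T alpha k t *m A)) w
         + q k t * bregman zeta zeta' (z k t.-1) w) ->
  (forall k t, (1 <= k <= N)%N -> (1 <= t <= T k)%N ->
     X (x k t) /\
     forall y, X y ->
       mu * nu (x k t) + dot (v k + z k t *m A^T) (x k t)
         + eta k t * bregman nu nu' (x k t.-1) (x k t)
         + p k * bregman nu nu' (xend x x0 T k.-1) (x k t)
       <= mu * nu y + dot (v k + z k t *m A^T) y
         + eta k t * bregman nu nu' (x k t.-1) y
         + p k * bregman nu nu' (xend x x0 T k.-1) y) ->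
  (* step-size conditions *)
  (forall k t, (1 <= k <= N)%N -> (2 <= t <= T k)%N ->
     alpha k t = 1 /\ opnorm nx nz A ^+ 2 <= eta k t.-1 * q k t) ->
  (forall k, (2 <= k <= N)%N ->
     beta k * (T k.-1)%:R * alpha k 1%N = beta k.-1 * (T k)%:R /\
     alpha k 1%N * opnorm nx nz A ^+ 2 <= eta k.-1 (T k.-1) * q k 1%N) ->
  forall zz, Z zz ->
    - (beta N / (T N)%:R) * opnorm nx nz A * nz (z N (T N) - zz)
        * nx (x N (T N) - x N (T N).-1)
      + beta N * eta N (T N) / (2 * (T N)%:R) * nx (x N (T N).-1 - x N (T N)) ^+ 2
    <= \sum_(1 <= k < N.+1) (beta k / (T k)%:R) *
         \sum_(1 <= t < (T k).+1)
           (dot (z k t *m A^T - zz *m A^T) (x k t - utilde x x0 T alpha k t)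
            + q k t * bregman zeta zeta' (z k t.-1) (z k t)
            + eta k t * bregman nu nu' (x k t.-1) (x k t)).
Proof.
move=> nx_norm nz_norm _ X_convex _ Z_convex _ _ nu_sc nu_sg zeta_sc zeta_sg N_gt0 T_gt0
  beta_p_gt0 steps_pos X_x0 Z_z0 warm_start z_step x_step inner_steps outer_steps zz _.
have beta_gt0 k kN := (beta_p_gt0 k kN).1.
apply: le_trans (weighted_carry_out_le_gap zz nx_norm nz_norm X_convex Z_convex
  nu_sc nu_sg zeta_sc zeta_sg N_gt0 T_gt0 beta_gt0 steps_pos X_x0 Z_z0 warm_start
  (fun k t kN tT => (x_step k t kN tT).1) (fun k t kN tT => (z_step k t kN tT).1)
  inner_steps outer_steps).
have NN : (1 <= N <= N)%N by rewrite N_gt0 leqnn.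
have TN_neq0 : (T N)%:R != 0 :> R by rewrite pnatr_eq0 -lt0n T_gt0.
rewrite (nrmB nx_norm (x N (T N).-1)); set D := x N (T N) - x N (T N).-1.
set op := opnorm nx nz A; set dz := nz (z N (T N) - zz); set e := eta N (T N).
have -> : - (beta N / (T N)%:R) * op * dz * nx D + beta N * e / (2 * (T N)%:R) * nx D ^+ 2
    = beta N / (T N)%:R * (- (op * dz * nx D) + e / 2 * nx D ^+ 2) by field.
rewrite ler_wpM2l ?divr_ge0 ?ler0n ?(ltW (beta_gt0 N NN)) //.
exact: carry_out_ge.
Qed.
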